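(* For every strong quasi-MV* algebra $\mathbf{Q}$ and every strong quasi-Wajsberg* algebra $\mathbf{S}$ we have $g(f(\mathbf{Q}))=\mathbf{Q}$ and $f(g(\mathbf{S}))=\mathbf{S}$. Hence $f$ and $g$ are mutually inverse correspondences between strong quasi-MV* algebras and strong quasi-Wajsberg* algebras.
   Context: A quasi-MV* algebra is an algebra $\langle A;\oplus,-,{}^{+},{}^{-},0,1\rangle$ of type $\langle 2,1,1,1,0,0\rangle$ (${}^+,{}^-$ bind more tightly than $-$, which binds more tightly than $\oplus$; $-1$ denotes $-(1)$) such that for all $x,y,z$: $x\oplus y=y\oplus x$; $(1\oplus x)\oplus(y\oplus(1\oplus z))=((1\oplus x)\oplus y)\oplus(1\oplus z)$; $(x\oplus 1)\oplus 1=1$; $(x\oplus y)\oplus 0=x\oplus y$; $x^{+}\oplus 0=(x\oplus 0)^{+}=1\oplus(-1\oplus x)$ and $x^{-}\oplus 0=(x\oplus 0)^{-}=-1\oplus(1\oplus x)$; $x\oplus y=(x^{+}\oplus y^{+})\oplus(x^{-}\oplus y^{-})$; $0=-0$; $x\oplus(-x)=0$; $-(x\oplus y)=(-x)\oplus(-y)$; $-(-x)=x$; $(-x\oplus(x\oplus y))^{+}=-x^{+}\oplus(x^{+}\oplus y^{+})$; $x\vee y=y\vee x$; $x\vee(y\vee z)=(x\vee y)\vee z$; $x\oplus(y\vee z)=(x\oplus y)\vee(x\oplus z)$; where $x\vee y:=(x^{+}\oplus(-x^{+}\oplus y^{+})^{+})\oplus(x^{-}\oplus(-x^{-}\oplus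 y^{-})^{+})$. A strong quasi-MV* algebra additionally satisfies $x^+=x^+\oplus 0$, $x^-=x^-\oplus 0$. A quasi-Wajsberg* algebra is an algebra $\langle W;\to,\neg,{}^+,{}^-,1\rangle$ of type $\langle 2,1,1,1,0\rangle$ (${}^+,{}^-$ bind more tightly than $\neg$, which binds more tightly than $\to$) such that for all $x,y,z$: $x\to y=\neg y\to\neg x$; $(x\to 1)\to((y\to 1)\to z)=(y\to 1)\to((x\to 1)\to z)$; $(1\to x)\to 1=1$; $(z\to z)\to(x\to y)=x\to y$; $(1\to 1)\to x^{+}=((1\to 1)\to x)^{+}=(x\to 1)\to 1$ and $(1\to 1)\to x^{-}=((1\to 1)\to x)^{-}=(x\to\neg 1)\to\neg 1$; $x\to y=(y^{+}\to x^{-})\to(x^{+}\to y^{-})$; $\neg(x\to y)=y\to x$; $\neg\neg x=x$; $(x\to(\neg x\to y))^{+}=x^{+}\to(\neg x^{+}\to y^{+})$; $x\vee y=y\vee x$; $x\vee(y\vee z)=(x\vee y)\vee z$; $x\to(y\vee z)=(x\to y)\vee(x\to z)$; where $x\vee y:=((x^{+}\to y^{+})^{+}\to(\neg x)^{-})\to((y^{-}\to x^{-})^{-}\to x^{-})$. A strong quasi-Wajsberg* algebra additionally satisfies $x^+=(1\to 1)\to x^+$, $x^-=(1\to 1)\to x^-$. For a strong quasi-MV* algebra $\mathbf{Q}$, $f(\mathbf{Q})=\langle Q;\to,\neg,{}^+,{}^-,1\rangle$ with $x\to y:=-x\oplus y$, $\neg x:=-x$ (same ${}^+,{}^-,1$);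 it is a strong quasi-Wajsberg* algebra. For a strong quasi-Wajsberg* algebra $\mathbf{S}$, $g(\mathbf{S})=\langle S;\oplus,-,{}^+,{}^-,0,1\rangle$ with $0:=x\to x$ (independent of $x$), $x\oplus y:=\neg x\to y$, $-x:=\neg x$ (same ${}^+,{}^-,1$); it is a strong quasi-MV* algebra. *)

Set Implicit Arguments.

Record mvs_ops (A : Type) := MvsOps {
  oplus : A -> A -> A;
  mneg  : A -> A;
  mpos  : A -> A;
  mnegp : A -> A;
  mzero : A;
  mone  : A }.

Record ws_ops (W : Type) := WsOps {
  wimp  : W -> W -> W;
  wneg  : W -> W;
  wpos  : W -> W;
  wnegp : W -> W;
  wone  : W }.

Section MV.
Variables (A : Type) (o : mvs_ops A).
Local Notation "x (+) y" := (oplus o x y) (at level 50, left associativity).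
Local Notation "- x" := (mneg o x).
Local Notation "x ^+" := (mpos o x) (at level 2, format "x ^+").
Local Notation "x ^-" := (mnegp o x) (at level 2, format "x ^-").
Local Notation ZERO := (mzero o).
Local Notation ONE := (mone o).

Definition mvs_join (x y : A) : A :=
  ((x^+) (+) (((- (x^+)) (+) (y^+))^+)) (+) ((x^-) (+) (((- (x^-)) (+) (y^-))^+)).

Definition is_quasi_mvs : Prop :=
  (forall x y, x (+) y = y (+) x) /\
  (forall x y z, (ONE (+) x) (+) (y (+) (ONE (+) z)) = ((ONE (+) x) (+) y) (+) (ONE (+) z)) /\
  (forall x, (x (+) ONE) (+) ONE = ONE) /\
  (forall x y, (x (+) y) (+) ZERO = x (+) y) /\
  (forall x, (x^+) (+) ZERO = (x (+) ZERO)^+ /\ (x (+) ZERO)^+ = ONE (+) ((- ONE) (+) x)) /\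
  (forall x, (x^-) (+) ZERO = (x (+) ZERO)^- /\ (x (+) ZERO)^- = (- ONE) (+) (ONE (+) x)) /\
  (forall x y, x (+) y = ((x^+) (+) (y^+)) (+) ((x^-) (+) (y^-))) /\
  (ZERO = - ZERO) /\
  (forall x, x (+) (- x) = ZERO) /\
  (forall x y, - (x (+) y) = (- x) (+) (- y)) /\
  (forall x, - (- x) = x) /\
  (forall x y, ((- x) (+) (x (+) y))^+ = (- (x^+)) (+) ((x^+) (+) (y^+))) /\
  (forall x y, mvs_join x y = mvs_join y x) /\
  (forall x y z, mvs_join x (mvs_join y z) = mvs_join (mvs_join x y) z) /\
  (forall x y z, x (+) (mvs_join y z) = mvs_join (x (+) y) (x (+) z)).

Definition is_strong_quasi_mvs : Prop :=
  is_quasi_mvs /\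
  (forall x, x^+ = (x^+) (+) ZERO) /\
  (forall x, x^- = (x^-) (+) ZERO).
End MV.

Section W.
Variables (W : Type) (s : ws_ops W).
Local Notation "x --> y" := (wimp s x y) (at level 55, right associativity).
Local Notation NEG := (wneg s).
Local Notation "x ^+" := (wpos s x) (at level 2, format "x ^+").
Local Notation "x ^-" := (wnegp s x) (at level 2, format "x ^-").
Local Notation ONE := (wone s).

Definition ws_join (x y : W) : W :=
  ((((x^+) --> (y^+))^+) --> ((NEG x)^-)) --> ((((y^-) --> (x^-))^-) --> (x^-)).

Definition is_quasi_ws : Prop :=
  (forall x y, x --> y = (NEG y) --> (NEG x)) /\
  (forall x y z, (x --> ONE) --> ((y --> ONE) --> z) = (y --> ONE) --> ((x --> ONE) --> z)) /\
  (forall x, (ONE --> x) --> ONE = ONE) /\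
  (forall x y z, (z --> z) --> (x --> y) = x --> y) /\
  (forall x, (ONE --> ONE) --> (x^+) = ((ONE --> ONE) --> x)^+ /\
             ((ONE --> ONE) --> x)^+ = (x --> ONE) --> ONE) /\
  (forall x, (ONE --> ONE) --> (x^-) = ((ONE --> ONE) --> x)^- /\
             ((ONE --> ONE) --> x)^- = (x --> (NEG ONE)) --> (NEG ONE)) /\
  (forall x y, x --> y = ((y^+) --> (x^-)) --> ((x^+) --> (y^-))) /\
  (forall x y, NEG (x --> y) = y --> x) /\
  (forall x, NEG (NEG x) = x) /\
  (forall x y, (x --> ((NEG x) --> y))^+ = (x^+) --> ((NEG (x^+)) --> (y^+))) /\
  (forall x y, ws_join x y = ws_join y x) /\
  (forall x y z, ws_join x (ws_join y z) = ws_join (ws_join x y) z) /\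
  (forall x y z, x --> (ws_join y z) = ws_join (x --> y) (x --> z)).

Definition is_strong_quasi_ws : Prop :=
  is_quasi_ws /\
  (forall x, x^+ = (ONE --> ONE) --> (x^+)) /\
  (forall x, x^- = (ONE --> ONE) --> (x^-)).
End W.

Definition f_map (A : Type) (o : mvs_ops A) : ws_ops A :=
  WsOps (fun x y => oplus o (mneg o x) y) (mneg o) (mpos o) (mnegp o) (mone o).

(** g : 0 := x -> x (independent of x; we take x := 1), x (+) y := ~x -> y,
    -x := ~x, same ^+, ^-, 1. *)
Definition g_map (W : Type) (s : ws_ops W) : mvs_ops W :=
  MvsOps (fun x y => wimp s (wneg s x) y) (wneg s) (wpos s) (wnegp s)
         (wimp s (wone s) (wone s)) (wone s).

From Stdlib Require Import FunctionalExtensionality.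
Set Implicit Arguments.

(* Both round trips just unfold the translated operations: [--x (+) y] and
   [~~x -> y] collapse by involutivity of negation, and the constant [1 -> 1]
   of [g (f Q)], i.e. [-1 (+) 1], equals [1 (+) -1 = 0]. *)

Section MvsRoundTrip.
Variables (A : Type) (Q : mvs_ops A).

Lemma quasi_mvs_oplusC : is_quasi_mvs Q -> forall x y, oplus Q x y = oplus Q y x.
Proof. intros (HC & _). exact HC. Qed.

Lemma quasi_mvs_oplusN : is_quasi_mvs Q -> forall x, oplus Q x (mneg Q x) = mzero Q.
Proof. intros (_ & _ & _ & _ & _ & _ & _ & _ & HN & _). exact HN. Qed.

Lemma quasi_mvs_negK : is_quasi_mvs Q -> forall x, mneg Q (mneg Q x) = x.
Proof. intros (_ & _ & _ & _ & _ & _ & _ & _ & _ & _ & HK & _). exact HK. Qed.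

Lemma g_f_map_id :
  (forall x y, oplus Q x y = oplus Q y x) ->
  (forall x, oplus Q x (mneg Q x) = mzero Q) ->
  (forall x, mneg Q (mneg Q x) = x) ->
  g_map (f_map Q) = Q.
Proof.
  destruct Q as [op ng ps nps z o]; simpl. intros HC HN HK.
  unfold g_map, f_map; simpl. f_equal.
  - apply functional_extensionality; intro x.
    apply functional_extensionality; intro y.
    now rewrite HK.
  - now rewrite HC, HN.
Qed.

End MvsRoundTrip.

Section WsRoundTrip.
Variables (W : Type) (S : ws_ops W).

Lemma quasi_ws_negK : is_quasi_ws S -> forall x, wneg S (wneg S x) = x.
Proof. intros (_ & _ & _ & _ & _ & _ & _ & _ & HK & _). exact HK. Qed.

Lemma f_g_map_id : (forall x, wneg S (wneg S x) = x) -> f_map (g_map S) = S.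
Proof.
  destruct S as [im ng ps nps o]; simpl. intros HK.
  unfold g_map, f_map; simpl. f_equal.
  apply functional_extensionality; intro x.
  apply functional_extensionality; intro y.
  now rewrite HK.
Qed.

End WsRoundTrip.

Theorem theorem3p2 :
  (forall (A : Type) (Q : mvs_ops A),
      is_strong_quasi_mvs Q -> g_map (f_map Q) = Q) /\
  (forall (W : Type) (S : ws_ops W),
      is_strong_quasi_ws S -> f_map (g_map S) = S).
Proof.
  split.
  - intros A Q [HQ _].
    apply g_f_map_id.
    + exact (quasi_mvs_oplusC HQ).
    + exact (quasi_mvs_oplusN HQ).
    + exact (quasi_mvs_negK HQ).
  - intros W S [HS _].
    apply f_g_map_id, quasi_ws_negK, HS.
Qed.
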